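(* Let $\Gamma$ be a group and $S$ a $\Gamma$-graded inverse semigroup equipped with a non-degenerate partial action on a nonempty set $X$. If $S$ is strongly graded, then the groupoid of germs $S\ltimes X$ is strongly graded in the induced $\Gamma$-grading.
   Context: Semigroups have a zero; $S$ is $\Gamma$-graded via $\deg:S\setminus\{0\}\to\Gamma$ with $\deg(st)=\deg(s)\deg(t)$ whenever $st\neq0$; $S_\alpha=\deg^{-1}(\alpha)\cup\{0\}$; strongly graded: $S_\alpha S_\beta=S_{\alpha\beta}$. A partial action of $S$ on $X$ is a zero-preserving homomorphism $s\mapsto\theta_s$ from $S$ into the symmetric inverse monoid $\mathcal I(X)$ (partial bijections of $X$, zero the empty map); $X_s=\mathrm{Dom}(\theta_s)$; it is non-degenerate if $X=\bigcup_{e\in E(S)}X_e$. On $\{(s,x):s\in S,x\in X_s\}$ let $(s,x)\sim(t,y)$ iff $x=y$ and there is an idempotent $e$ with $x\in X_e$ and $se=te$; the class $[s,x]$ is the germ. $S\ltimes X$ is the set of germs, a groupoid with $\mathbf d([s,x])=x$, $\mathbf r([s,x])=\theta_s(x)$, $[s,x][t,y]=[st,y]$ when $x=\theta_t(y)$, $[s,x]^{-1}=[s^{-1},\theta_s(x)]$, unit space identified with $X$. Its induced grading is $[s,x]\mapsto\deg(s)$, with $(S\ltimes X)_\alpha$ the germs of degree $\alpha$. A graded groupoid $\mathscr G$ is strongly graded if $\mathscr G_\alpha\mathscr G_\beta=\mathscr G_{\alpha\beta}$ for all $\alpha,\beta$, where $AB=\{ab:a\in A,b\in B,\mathbf d(a)=\mathbf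 r(b)\}$. *)

Set Implicit Arguments.

Definition is_group (G : Type) (gmul : G -> G -> G) (gone : G) (ginv : G -> G)
  : Prop :=
  (forall a b c, gmul (gmul a b) c = gmul a (gmul b c)) /\
  (forall a, gmul gone a = a) /\ (forall a, gmul a gone = a) /\
  (forall a, gmul (ginv a) a = gone) /\ (forall a, gmul a (ginv a) = gone).

Definition is_inverse_semigroup_with_zero (S : Type) (smul : S -> S -> S)
  (szero : S) : Prop :=
  (forall a b c, smul (smul a b) c = smul a (smul b c)) /\
  (forall a, smul szero a = szero) /\ (forall a, smul a szero = szero) /\
  (forall s, exists t, (smul (smul s t) s = s /\ smul (smul t s) t = t) /\
     forall t', smul (smul s t') s = s /\ smul (smul t' s) t' = t' -> t' = t).

Definition idempotent (S : Type) (smul : S -> S -> S) (e : S) : Prop :=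
  smul e e = e.

(** Gamma-grading: deg : S \ {0} -> Gamma (value at 0 irrelevant). *)
Definition is_grading (S G : Type) (smul : S -> S -> S) (szero : S)
  (gmul : G -> G -> G) (deg : S -> G) : Prop :=
  forall s t, smul s t <> szero -> deg (smul s t) = gmul (deg s) (deg t).

Definition homog (S G : Type) (szero : S) (deg : S -> G) (a : G) (s : S)
  : Prop := s = szero \/ (s <> szero /\ deg s = a).

Definition strongly_graded_semigroup (S G : Type) (smul : S -> S -> S)
  (szero : S) (gmul : G -> G -> G) (deg : S -> G) : Prop :=
  forall a b u, homog szero deg (gmul a b) u <->
    exists s t, homog szero deg a s /\ homog szero deg b t /\ u = smul s t.

(** Partial bijections of X (elements of the symmetric inverse monoid),
    represented as injective partial functions X -> option X. *)
Definition pcomp (X : Type) (f g : X -> option X) (x : X) : option X :=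
  match g x with Some y => f y | None => None end.

Definition partial_injection (X : Type) (f : X -> option X) : Prop :=
  forall x x' y, f x = Some y -> f x' = Some y -> x = x'.

Definition is_partial_action (S X : Type) (smul : S -> S -> S) (szero : S)
  (theta : S -> X -> option X) : Prop :=
  (forall s, partial_injection (theta s)) /\
  (forall s t x, theta (smul s t) x = pcomp (theta s) (theta t) x) /\
  (forall x, theta szero x = None).

Definition non_degenerate (S X : Type) (smul : S -> S -> S)
  (theta : S -> X -> option X) : Prop :=
  forall x, exists e, idempotent smul e /\ theta e x <> None.

(** Germs.  A germ is represented by a pair (s, x) with x ∈ X_s; the groupoid
    S ⋉ X is the set of such pairs modulo germ_equiv. *)
Definition germ_rep (S X : Type) (theta : S -> X -> option X) (s : S) (x : X)
  : Prop := theta s x <> None.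

Definition germ_equiv (S X : Type) (smul : S -> S -> S)
  (theta : S -> X -> option X) (p q : S * X) : Prop :=
  snd p = snd q /\
  exists e, idempotent smul e /\ theta e (snd p) <> None /\
            smul (fst p) e = smul (fst q) e.

Definition germ_in_degree (S X G : Type) (theta : S -> X -> option X)
  (deg : S -> G) (a : G) (p : S * X) : Prop :=
  germ_rep theta (fst p) (snd p) /\ deg (fst p) = a.

(** d([s,x]) = r([t,y]), i.e. x = theta_t(y). *)
Definition germ_composable (S X : Type) (theta : S -> X -> option X)
  (p q : S * X) : Prop := theta (fst q) (snd q) = Some (snd p).

Definition germ_mul (S X : Type) (smul : S -> S -> S) (p q : S * X) : S * X :=
  (smul (fst p) (fst q), snd q).

(** The groupoid of germs is strongly graded:
    (S ⋉ X)_alpha (S ⋉ X)_beta = (S ⋉ X)_{alpha beta}, as sets of germs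
    (i.e. modulo germ_equiv). *)
Definition germ_groupoid_strongly_graded (S X G : Type) (smul : S -> S -> S)
  (gmul : G -> G -> G) (deg : S -> G) (theta : S -> X -> option X) : Prop :=
  forall a b (g : S * X), germ_rep theta (fst g) (snd g) ->
    (germ_in_degree theta deg (gmul a b) g <->
     exists p q, germ_in_degree theta deg a p /\ germ_in_degree theta deg b q /\
       germ_composable theta p q /\ germ_equiv smul theta (germ_mul smul p q) g).


(* Degrees of germs are well defined: if [s e = s' e] with [x] in the domain of
   the idempotent [e], then [s e] is nonzero (it acts on [x]), so
   [deg s * deg e = deg s' * deg e] and [deg s = deg s'] by cancellation in the
   group.  Degrees multiply along composable germs for the same reason.
   Conversely a germ [[s, x]] of degree [a b] factors through strong grading as
   [s = s1 t] with [deg s1 = a], [deg t = b], giving [[s, x] = [s1, t x] [t, x]]. *)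

Lemma group_mul_cancel_r {G : Type} {gmul : G -> G -> G} {gone : G}
  {ginv : G -> G} :
  is_group gmul gone ginv -> forall a b c, gmul a c = gmul b c -> a = b.
Proof.
  intros [gA [_ [g1r [_ gVr]]]] a b c E.
  rewrite <- (g1r a), <- (g1r b), <- (gVr c), <- !gA, E.
  reflexivity.
Qed.

Lemma homog_deg {S G : Type} {szero : S} {deg : S -> G} {a : G} {s : S} :
  homog szero deg a s -> s <> szero -> deg s = a.
Proof. intros [-> | [_ Hd]] Hs; [contradiction | exact Hd]. Qed.

Section PartialAction.

Context {S X : Type} {smul : S -> S -> S} {szero : S}
  {theta : S -> X -> option X}.
Hypothesis Hact : is_partial_action smul szero theta.

Lemma acting_nonzero {u x} : theta u x <> None -> u <> szero.
Proof.
  destruct Hact as [_ [_ H0]].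
  intros Hu ->. apply Hu, H0.
Qed.

Lemma theta_mul_Some s {t x y} :
  theta t x = Some y -> theta (smul s t) x = theta s y.
Proof.
  destruct Hact as [_ [Hhom _]].
  intros Ht. rewrite Hhom. unfold pcomp. rewrite Ht. reflexivity.
Qed.

Lemma theta_mul_defined {s t x} :
  theta (smul s t) x <> None -> exists y, theta t x = Some y /\ theta s y <> None.
Proof.
  destruct Hact as [_ [Hhom _]].
  rewrite Hhom. unfold pcomp.
  destruct (theta t x) as [y|]; [eauto | contradiction].
Qed.

(* [theta e] is an injective idempotent partial map, hence the identity on its
   domain. *)
Lemma idempotent_fixes {e x} :
  idempotent smul e -> theta e x <> None -> theta e x = Some x.
Proof.
  destruct Hact as [Hinj _].
  intros He Hx.
  destruct (theta e x) as [y|] eqn:Ey; [|contradiction].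
  assert (Ey' : theta e y = Some y).
  { rewrite <- (theta_mul_Some e Ey), He. exact Ey. }
  rewrite (Hinj e x y y Ey Ey'). reflexivity.
Qed.

Lemma germ_equiv_refl p :
  non_degenerate smul theta -> germ_equiv smul theta p p.
Proof.
  intros Hnd. split; [reflexivity|].
  destruct (Hnd (snd p)) as [e [He Hex]]. exists e. auto.
Qed.

Section Grading.

Context {G : Type} {gmul : G -> G -> G} {gone : G} {ginv : G -> G}
  {deg : S -> G}.
Hypothesis Hgroup : is_group gmul gone ginv.
Hypothesis Hgr : is_grading smul szero gmul deg.

Lemma deg_mul_acting {s t x} :
  theta (smul s t) x <> None -> deg (smul s t) = gmul (deg s) (deg t).
Proof. intros H. exact (Hgr s t (acting_nonzero H)). Qed.

Lemma germ_equiv_deg {p q} :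
  germ_rep theta (fst p) (snd p) -> germ_equiv smul theta p q ->
  deg (fst p) = deg (fst q).
Proof.
  destruct p as [s x], q as [s' x']; unfold germ_rep, germ_equiv; simpl.
  intros Hs [_ [e [He [Hex Heq]]]].
  assert (Hse : theta (smul s e) x <> None).
  { rewrite (theta_mul_Some s (idempotent_fixes He Hex)). exact Hs. }
  assert (Hs'e : theta (smul s' e) x <> None) by (rewrite <- Heq; exact Hse).
  apply (group_mul_cancel_r Hgroup _ _ (deg e)).
  rewrite <- (deg_mul_acting Hse), <- (deg_mul_acting Hs'e), Heq.
  reflexivity.
Qed.

Lemma germ_in_degree_equiv {a p q} :
  germ_in_degree theta deg a p -> germ_equiv smul theta p q ->
  germ_rep theta (fst q) (snd q) -> germ_in_degree theta deg a q.
Proof.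
  intros [Hp Hd] Hpq Hq. split; [exact Hq|].
  rewrite <- (germ_equiv_deg Hp Hpq). exact Hd.
Qed.

Lemma germ_in_degree_mul {a b p q} :
  germ_in_degree theta deg a p -> germ_in_degree theta deg b q ->
  germ_composable theta p q ->
  germ_in_degree theta deg (gmul a b) (germ_mul smul p q).
Proof.
  destruct p as [s x], q as [t y];
    unfold germ_in_degree, germ_rep, germ_composable, germ_mul; simpl.
  intros [Hs Hds] [_ Hdt] Hc.
  assert (Hst : theta (smul s t) y <> None)
    by (rewrite (theta_mul_Some s Hc); exact Hs).
  split; [exact Hst|].
  rewrite (deg_mul_acting Hst), Hds, Hdt. reflexivity.
Qed.

End Grading.

Lemma germ_factor {G : Type} {gmul : G -> G -> G} {deg : S -> G} {a b g} :
  strongly_graded_semigroup smul szero gmul deg ->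
  non_degenerate smul theta ->
  germ_in_degree theta deg (gmul a b) g ->
  exists p q, germ_in_degree theta deg a p /\ germ_in_degree theta deg b q /\
    germ_composable theta p q /\ germ_equiv smul theta (germ_mul smul p q) g.
Proof.
  destruct g as [s x]; unfold germ_in_degree, germ_rep; simpl.
  intros Hsg Hnd [Hs Hd].
  assert (Hh : homog szero deg (gmul a b) s)
    by (right; split; [exact (acting_nonzero Hs) | exact Hd]).
  apply Hsg in Hh. destruct Hh as [s1 [t [Hs1 [Ht ->]]]].
  destruct (theta_mul_defined Hs) as [x1 [Htx Hs1x1]].
  assert (Htx' : theta t x <> None) by congruence.
  exists (s1, x1), (t, x).
  unfold germ_composable, germ_mul; simpl.
  split; [split; [exact Hs1x1 | exact (homog_deg Hs1 (acting_nonzero Hs1x1))]|].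
  split; [split; [exact Htx' | exact (homog_deg Ht (acting_nonzero Htx'))]|].
  split; [exact Htx | exact (germ_equiv_refl _ Hnd)].
Qed.

End PartialAction.

Theorem proposition6p1
  (G : Type) (gmul : G -> G -> G) (gone : G) (ginv : G -> G)
  (S : Type) (smul : S -> S -> S) (szero : S) (deg : S -> G)
  (X : Type) (theta : S -> X -> option X) :
  is_group gmul gone ginv ->
  is_inverse_semigroup_with_zero smul szero ->
  is_grading smul szero gmul deg ->
  is_partial_action smul szero theta ->
  non_degenerate smul theta ->
  inhabited X ->
  strongly_graded_semigroup smul szero gmul deg ->
  germ_groupoid_strongly_graded smul gmul deg theta.
Proof.
  intros Hgroup _ Hgr Hact Hnd _ Hsg a b g Hg. split.
  - exact (germ_factor Hact Hsg Hnd).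
  - intros [p [q [Hp [Hq [Hc Hpq]]]]].
    exact (germ_in_degree_equiv Hact Hgroup Hgr
             (germ_in_degree_mul Hact Hgr Hp Hq Hc) Hpq Hg).
Qed.
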